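(* Let $q\in(0,1/2]$, $k>0$, $D>0$, and let $(\bar u,\bar z)$ be a weak-detonation profile as described in the context, with $0\le u_+<u_{\mathrm{ig}}<u_-<1$, so that $\bar u$ is non-increasing (Proposition 2.3) and $0\le \bar u\le 1$, $0\le\bar z\le1$. Define \[ L:=\sup_{x\in\mathbb{R}}\varphi'(\bar u(x))\bar z(x),\qquad M:=\sup_{x\in\mathbb{R}}\Big((1+q)\varphi'(\bar u(x))\bar z(x)-\varphi(\bar u(x))\Big), \] and assume $L>0$. Suppose $\lambda\in\mathbb{C}$ with $\operatorname{Re}\lambda\ge0$ is an eigenvalue of the integrated eigenvalue problem \begin{align*} \lambda w-(1-\bar u)w'&=q\bar u\,z+q(D-1)z'+w'',\\ \lambda z+k\big(\varphi(\bar u)-q\varphi'(\bar u)\bar z\big)z&=z'+k\varphi'(\bar u)\bar z\,w'+Dz'', \end{align*} i.e. there is a nontrivial solution $(w,z)\in H^2(\mathbb{R})\times H^2(\mathbb{R})$. Then \[ \operatorname{Re}\lambda+|\operatorname{Im}\lambda|\le\max\Big\{3,\ \frac{1}{4D}+\Big(\frac14+\frac12|D-1|^2\Big)kL+kM\Big\}. \]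
   Context: Setting: the rescaled Majda model $u_t-u_x+(u^2/2)_x=u_{xx}+qk\varphi(u)z$, $z_t-z_x=Dz_{xx}-k\varphi(u)z$, with ignition function $\varphi(u)=0$ for $u\le u_{\mathrm{ig}}$, $\varphi(u)=e^{-E_A/(u-u_{\mathrm{ig}})}$ for $u>u_{\mathrm{ig}}$ ($E_A>0$). A weak-detonation profile is a steady solution $(\bar u,\bar z)(x)$ of this system (speed normalized to $1$) with $(\bar u,\bar z)\to(u_-,0)$ as $x\to-\infty$ and $(\bar u,\bar z)\to(u_+,1)$ as $x\to+\infty$, where $\tfrac12(u_+^2-u_-^2)=u_+-u_-+q$ and $u_\pm<1$. Here $'$ denotes $\mathrm d/\mathrm dx$, and the equations in $(w,z)$ are the linearized eigenvalue equations written in the integrated variable $w$ with $w'=u+qz$ ($u,z$ the perturbations). *)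

From Stdlib Require Import Reals Lra.
Open Scope R_scope.

Definition phi (EA uig u : R) : R :=
  if Rle_dec u uig then 0 else exp (- EA / (u - uig)).

Definition dphi (EA uig u : R) : R :=
  if Rle_dec u uig then 0 else EA / (u - uig) ^ 2 * exp (- EA / (u - uig)).

Definition derivs2 (f f1 f2 : R -> R) : Prop :=
  forall x, derivable_pt_lim f x (f1 x) /\ derivable_pt_lim f1 x (f2 x).

(* Square integrability over R (improper Riemann integral of f^2 finite);
   used for continuous f, where it coincides with membership in L^2(R). *)
Definition L2R (f : R -> R) : Prop :=
  exists B : R, forall (a b : R)
    (pr : Riemann_integrable (fun x => (f x) ^ 2) a b),
    a <= b -> RiemannInt pr <= B.

Definition H2R (f f1 f2 : R -> R) : Prop :=
  derivs2 f f1 f2 /\ L2R f /\ L2R f1 /\ L2R f2.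

Definition lim_minf (f : R -> R) (l : R) : Prop :=
  forall eps, 0 < eps -> exists N, forall x, x < N -> Rabs (f x - l) < eps.
Definition lim_pinf (f : R -> R) (l : R) : Prop :=
  forall eps, 0 < eps -> exists N, forall x, N < x -> Rabs (f x - l) < eps.

(* Weak-detonation profile (speed normalized to 1): steady solution of
     u_t - u_x + (u^2/2)_x = u_xx + q k phi(u) z,
     z_t - z_x = D z_xx - k phi(u) z,
   i.e. - ub' + ub ub' = ub'' + q k phi(ub) zb,  - zb' = D zb'' - k phi(ub) zb,
   with (ub,zb) -> (um,0) at -oo and (ub,zb) -> (up,1) at +oo,
   Rankine-Hugoniot relation and um, up < 1. *)
Definition weak_detonation_profile (q k D EA uig um up : R)
  (ub ub1 ub2 zb zb1 zb2 : R -> R) : Prop :=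
  derivs2 ub ub1 ub2 /\ derivs2 zb zb1 zb2 /\
  (forall x, - ub1 x + ub x * ub1 x = ub2 x + q * k * phi EA uig (ub x) * zb x) /\
  (forall x, - zb1 x = D * zb2 x - k * phi EA uig (ub x) * zb x) /\
  lim_minf ub um /\ lim_minf zb 0 /\ lim_pinf ub up /\ lim_pinf zb 1 /\
  (up ^ 2 - um ^ 2) / 2 = up - um + q /\ um < 1 /\ up < 1.

From Stdlib Require Import Reals Lra Psatz Classical.
From Coquelicot Require Import Coquelicot.
Open Scope R_scope.

(* Write lambda = a + i b and pick s = +-1 with s b = |b|.  Pairing the z-equation with z
   and the w-equation with (k L) w, taking real part minus s times imaginary part, gives
   pointwise  Psi' = (a + |b|) (|z|^2 + k L |w|^2) + R  for a quadratic form Psi in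
   (w, w', z, z'), and Young's inequality (with q <= 1/2 and Proposition 2.3) bounds the
   remainder R below by -Y (|z|^2 + k L |w|^2), where Y is the claimed bound.  If
   a + |b| > Y, Psi is thus nondecreasing and strictly increasing wherever the
   eigenfunction is nonzero; but Psi is dominated by the integrable H^1 density of the
   eigenfunction, so it is small near both ends of the line and hence constant. *)

Definition bounded_RInt (g : R -> R) : Prop :=
  (forall x, continuous g x) /\ exists B, forall a b, a <= b -> RInt g a b <= B.

Lemma bounded_RInt_plus (f g : R -> R) :
  bounded_RInt f -> bounded_RInt g -> bounded_RInt (fun x => f x + g x).
Proof.
  intros [cf [Bf Hf]] [cg [Bg Hg]]; split.
  - intro x. apply (continuous_plus f g); auto.
  - exists (Bf + Bg). intros a b hab.
    assert (ef : ex_RInt f a b) by (apply (@ex_RInt_continuous R_CompleteNormedModule); auto).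
    assert (eg : ex_RInt g a b) by (apply (@ex_RInt_continuous R_CompleteNormedModule); auto).
    pose proof (RInt_plus f g a b ef eg) as E. simpl in E.
    change plus with Rplus in E. rewrite E.
    specialize (Hf a b hab); specialize (Hg a b hab). lra.
Qed.

Lemma bounded_RInt_small_values (g : R -> R) : bounded_RInt g ->
  forall eps N, 0 < eps ->
  (exists x, N < x /\ g x < eps) /\ (exists y, y < N /\ g y < eps).
Proof.
  intros [cg [B HB]] eps N Heps.
  set (T := (Rabs B + 1) / eps).
  assert (HT : T * eps = Rabs B + 1) by (unfold T; field; lra).
  assert (HT0 : 0 < T) by (unfold T; apply Rdiv_lt_0_compat; [pose proof (Rabs_pos B)|]; lra).
  assert (no_long_interval : forall a, ~ (forall x, a < x < a + T -> eps <= g x)).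
  { intros a Ha.
    assert (eg : ex_RInt g a (a + T))
      by (apply (@ex_RInt_continuous R_CompleteNormedModule); auto).
    pose proof (RInt_le (fun _ => eps) g a (a + T) ltac:(lra) (ex_RInt_const _ _ _) eg Ha) as H.
    rewrite RInt_const in H. unfold scal in H; simpl in H; unfold mult in H; simpl in H.
    specialize (HB a (a + T) ltac:(lra)). pose proof (Rle_abs B).
    replace (a + T - a) with T in H by ring. lra. }
  split; apply NNPP; intro Hn.
  - apply (no_long_interval (N + 1)). intros x Hx.
    apply Rnot_lt_le. intro Hlt. apply Hn. exists x. split; [lra | exact Hlt].
  - apply (no_long_interval (N - 1 - T)). intros x Hx.
    apply Rnot_lt_le. intro Hlt. apply Hn. exists x. split; [lra | exact Hlt].
Qed.

Lemma L2R_bounded_RInt (f f1 : R -> R) :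
  (forall x, derivable_pt_lim f x (f1 x)) -> L2R f -> bounded_RInt (fun x => f x ^ 2).
Proof.
  intros Hd [B HB].
  assert (cf : forall x, continuous f x).
  { intro x. apply (@ex_derive_continuous R_AbsRing R_NormedModule).
    exists (f1 x). now apply is_derive_Reals. }
  assert (c2 : forall x, continuous (fun x => f x ^ 2) x).
  { intro x. apply (continuous_mult f (fun x => f x ^ 1)); auto.
    apply (continuous_mult f (fun _ => 1)); auto. apply continuous_const. }
  split; auto. exists B. intros a b hab.
  assert (e : ex_RInt (fun x => f x ^ 2) a b)
    by (apply (@ex_RInt_continuous R_CompleteNormedModule); auto).
  rewrite (RInt_Reals _ _ _ (ex_RInt_Reals_0 _ _ _ e)). now apply HB.
Qed.

Lemma increasing_dominated_const (F S : R -> R) (C : R) :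
  increasing F -> 0 < C -> (forall t, Rabs (F t) <= C * S t) -> bounded_RInt S ->
  forall x y, F x = F y.
Proof.
  intros Hmon HC Hdom HS.
  assert (Hdec : forall x y, x < y -> F y <= F x).
  { intros x y hxy. apply Rnot_lt_le. intro Hlt.
    set (eps := (F y - F x) / (3 * C)).
    assert (heps : 0 < eps) by (unfold eps; apply Rdiv_lt_0_compat; lra).
    assert (hCe : 3 * (C * eps) = F y - F x) by (unfold eps; field; lra).
    destruct (bounded_RInt_small_values S HS eps y heps) as [[u [hu Su]] _].
    destruct (bounded_RInt_small_values S HS eps x heps) as [_ [v [hv Sv]]].
    pose proof (Hmon y u ltac:(lra)). pose proof (Hmon v x ltac:(lra)).
    pose proof (proj1 (Rabs_le_between _ _) (Hdom u)).
    pose proof (proj1 (Rabs_le_between _ _) (Hdom v)).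
    pose proof (Rmult_lt_compat_l C _ _ HC Su). pose proof (Rmult_lt_compat_l C _ _ HC Sv).
    lra. }
  intros x y. destruct (Rtotal_order x y) as [h | [h | h]].
  - apply Rle_antisym; [apply Hmon; lra | now apply Hdec].
  - now subst.
  - apply Rle_antisym; [now apply Hdec | apply Hmon; lra].
Qed.

Lemma nonneg_derivative_dominated_zero (F dF S : R -> R) (C : R) :
  (forall t, derivable_pt_lim F t (dF t)) -> (forall t, 0 <= dF t) ->
  0 < C -> (forall t, Rabs (F t) <= C * S t) -> bounded_RInt S ->
  forall t, dF t = 0.
Proof.
  intros Hder Hpos HC Hdom HS t.
  set (pr := fun x => exist _ (dF x) (Hder x) : derivable_pt F x).
  assert (Hconst := increasing_dominated_const F S C
    (nonneg_derivative_1 F pr Hpos) HC Hdom HS).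
  apply (uniqueness_limite F t); [apply Hder |].
  apply is_derive_Reals, (is_derive_ext (fun _ => F t)); [intro; apply Hconst |].
  apply (@is_derive_const R_AbsRing R_NormedModule).
Qed.

(* For x = x1 + i x2, y = y1 + i y2: [twist s x y = Re ((1 + i s) conj x * y)], so pairing
   [lambda * x] with x gives [(Re lambda + s Im lambda) |x|^2]. *)
Definition twist (s x1 x2 y1 y2 : R) : R :=
  x1 * y1 + x2 * y2 + s * (x2 * y1 - x1 * y2).

Lemma cross_young (c e x1 x2 y1 y2 : R) : 0 < e ->
  c * (x2 * y1 - x1 * y2) <= e * (x1 ^ 2 + x2 ^ 2) + c ^ 2 / (4 * e) * (y1 ^ 2 + y2 ^ 2).
Proof.
  intro he.
  assert (E : e * (x1 ^ 2 + x2 ^ 2) + c ^ 2 / (4 * e) * (y1 ^ 2 + y2 ^ 2)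
              - c * (x2 * y1 - x1 * y2)
            = e * ((x2 - c * y1 / (2 * e)) ^ 2 + (x1 + c * y2 / (2 * e)) ^ 2))
    by (field; lra).
  assert (0 <= (x2 - c * y1 / (2 * e)) ^ 2 + (x1 + c * y2 / (2 * e)) ^ 2)
    by (pose proof (pow2_ge_0 (x2 - c * y1 / (2 * e)));
        pose proof (pow2_ge_0 (x1 + c * y2 / (2 * e))); lra).
  nra.
Qed.

(* Young's inequality with the sharp bound |twist s x y| <= sqrt 2 |x| |y|. *)
Lemma twist_young (s c x1 x2 y1 y2 : R) : s = 1 \/ s = -1 ->
  c * twist s x1 x2 y1 y2 <= (y1 ^ 2 + y2 ^ 2) / 4 + 2 * c ^ 2 * (x1 ^ 2 + x2 ^ 2).
Proof.
  intros hs. unfold twist.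
  destruct hs as [-> | ->].
  - pose proof (pow2_ge_0 (y1 - y2 - 4 * c * x1)). pose proof (pow2_ge_0 (y1 + y2 - 4 * c * x2)).
    nra.
  - pose proof (pow2_ge_0 (y1 + y2 - 4 * c * x1)). pose proof (pow2_ge_0 (y2 - y1 - 4 * c * x2)).
    nra.
Qed.

Lemma twist_swap (s x1 x2 y1 y2 : R) : twist s x1 x2 y1 y2 = twist (- s) y1 y2 x1 x2.
Proof. unfold twist; ring. Qed.

Lemma Rabs_twist_le (s x1 x2 y1 y2 : R) : s = 1 \/ s = -1 ->
  Rabs (twist s x1 x2 y1 y2) <= x1 ^ 2 + x2 ^ 2 + y1 ^ 2 + y2 ^ 2.
Proof.
  intro hs. apply Rabs_le.
  pose proof (twist_young s (1 / 2) x1 x2 y1 y2 hs).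
  pose proof (twist_young s (- (1 / 2)) x1 x2 y1 y2 hs).
  pose proof (pow2_ge_0 x1); pose proof (pow2_ge_0 x2);
  pose proof (pow2_ge_0 y1); pose proof (pow2_ge_0 y2).
  split; nra.
Qed.

Lemma z_energy_estimate (s D a b g c KM be z1 z1' z1'' z2 z2' z2'' w1' w2' : R) :
  s = 1 \/ s = -1 -> 0 < D -> 0 <= g <= be -> g - c <= KM ->
  a * z1 - b * z2 + c * z1 = z1' + g * w1' + D * z1'' ->
  a * z2 + b * z1 + c * z2 = z2' + g * w2' + D * z2'' ->
  (a + s * b) * (z1 ^ 2 + z2 ^ 2) <=
    z1 * z1' + z2 * z2' + D * (twist s z1'' z2'' z1 z2 + twist s z1' z2' z1' z2')
    + (1 / (4 * D) + KM) * (z1 ^ 2 + z2 ^ 2) + be / 2 * (w1' ^ 2 + w2' ^ 2).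
Proof.
  intros hs hD [hg hgbe] hKM E1 E2.
  assert (young_z := cross_young s D z1' z2' z1 z2 hD).
  assert (young_w := twist_young (- s) (1 / 2) z1 z2 w1' w2'
                       ltac:(destruct hs; [right | left]; lra)).
  assert (sq : forall x, 0 <= x ^ 2) by (intro; apply pow2_ge_0).
  assert (hz : 0 <= z1 ^ 2 + z2 ^ 2) by (pose proof (sq z1); pose proof (sq z2); lra).
  assert (hw : 0 <= w1' ^ 2 + w2' ^ 2) by (pose proof (sq w1'); pose proof (sq w2'); lra).
  assert (coupling : g * twist (- s) z1 z2 w1' w2'
                     <= be / 2 * (w1' ^ 2 + w2' ^ 2) + g * (z1 ^ 2 + z2 ^ 2)) by nra.
  assert (reaction : (g - c) * (z1 ^ 2 + z2 ^ 2) <= KM * (z1 ^ 2 + z2 ^ 2))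
    by (apply Rmult_le_compat_r; lra).
  replace (D * (twist s z1'' z2'' z1 z2 + twist s z1' z2' z1' z2'))
    with (twist s (D * z1'') (D * z2'') z1 z2 + D * (z1' ^ 2 + z2' ^ 2))
    by (unfold twist; ring).
  replace (D * z1'') with (a * z1 - b * z2 + c * z1 - z1' - g * w1') by lra.
  replace (D * z2'') with (a * z2 + b * z1 + c * z2 - z2' - g * w2') by lra.
  unfold twist in *.
  destruct hs as [-> | ->]; lra.
Qed.

Lemma w_energy_estimate (s q D a b u u1 w1 w1' w1'' w2 w2' w2'' z1 z1' z2 z2' : R) :
  s = 1 \/ s = -1 -> 0 < q <= 1 / 2 -> 0 <= u <= 1 -> u1 <= 0 ->
  a * w1 - b * w2 - (1 - u) * w1' = q * u * z1 + q * (D - 1) * z1' + w1'' ->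
  a * w2 + b * w1 - (1 - u) * w2' = q * u * z2 + q * (D - 1) * z2' + w2'' ->
  (a + s * b) * (w1 ^ 2 + w2 ^ 2) + (w1' ^ 2 + w2' ^ 2) / 2 <=
    - u1 * (w1 ^ 2 + w2 ^ 2) / 2 + (1 - u) * (w1 * w1' + w2 * w2')
    + q * (D - 1) * (twist s z1' z2' w1 w2 + twist s z1 z2 w1' w2')
    + twist s w1'' w2'' w1 w2 + twist s w1' w2' w1' w2'
    + 3 / 2 * (w1 ^ 2 + w2 ^ 2) + (1 / 4 + (D - 1) ^ 2 / 2) * (z1 ^ 2 + z2 ^ 2).
Proof.
  intros hs hq hu hu1 E1 E2.
  assert (hs2 : s ^ 2 = 1) by (destruct hs as [-> | ->]; ring).
  assert (sq : forall x, 0 <= x ^ 2) by (intro; apply pow2_ge_0).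
  assert (hz : 0 <= z1 ^ 2 + z2 ^ 2) by (pose proof (sq z1); pose proof (sq z2); lra).
  assert (hw : 0 <= w1 ^ 2 + w2 ^ 2) by (pose proof (sq w1); pose proof (sq w2); lra).
  assert (transport : s * (1 - u) * (w2' * w1 - w1' * w2)
                      <= (w1' ^ 2 + w2' ^ 2) / 4 + (w1 ^ 2 + w2 ^ 2)).
  { pose proof (cross_young (s * (1 - u)) (1 / 4) w1' w2' w1 w2 ltac:(lra)).
    assert ((s * (1 - u)) ^ 2 <= 1) by (rewrite Rpow_mult_distr, hs2; nra).
    assert ((s * (1 - u)) ^ 2 / (4 * (1 / 4)) * (w1 ^ 2 + w2 ^ 2) <= w1 ^ 2 + w2 ^ 2)
      by (replace (4 * (1 / 4)) with 1 by field; nra).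
    lra. }
  assert (source : q * u * twist s z1 z2 w1 w2 <= (z1 ^ 2 + z2 ^ 2) / 4 + (w1 ^ 2 + w2 ^ 2) / 2).
  { rewrite twist_swap.
    pose proof (twist_young (- s) (q * u) w1 w2 z1 z2 ltac:(destruct hs; [right | left]; lra)).
    assert (0 <= q * u <= 1 / 2) by nra.
    assert (2 * (q * u) ^ 2 <= 1 / 2) by nra.
    assert (2 * (q * u) ^ 2 * (w1 ^ 2 + w2 ^ 2) <= 1 / 2 * (w1 ^ 2 + w2 ^ 2))
      by (apply Rmult_le_compat_r; lra).
    lra. }
  assert (diffusion : - (q * (D - 1)) * twist s z1 z2 w1' w2'
                      <= (w1' ^ 2 + w2' ^ 2) / 4 + (D - 1) ^ 2 / 2 * (z1 ^ 2 + z2 ^ 2)).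
  { pose proof (twist_young s (- (q * (D - 1))) z1 z2 w1' w2' hs).
    assert (2 * (- (q * (D - 1))) ^ 2 * (z1 ^ 2 + z2 ^ 2) <= (D - 1) ^ 2 / 2 * (z1 ^ 2 + z2 ^ 2)).
    { apply Rmult_le_compat_r; [exact hz |].
      replace (2 * (- (q * (D - 1))) ^ 2) with (2 * q ^ 2 * (D - 1) ^ 2) by ring.
      assert (q ^ 2 <= 1 / 4) by nra.
      pose proof (sq (D - 1)). nra. }
    lra. }
  assert (hu1w : 0 <= - u1 * (w1 ^ 2 + w2 ^ 2)) by nra.
  replace w1'' with (a * w1 - b * w2 - (1 - u) * w1' - q * u * z1 - q * (D - 1) * z1') by lra.
  replace w2'' with (a * w2 + b * w1 - (1 - u) * w2' - q * u * z2 - q * (D - 1) * z2') by lra.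
  unfold twist in *.
  destruct hs as [-> | ->]; lra.
Qed.

Section EnergyEstimate.

Variables (q D a b Y be KM : R) (ub ub1 g c : R -> R)
  (w1 w1' w1'' w2 w2' w2'' z1 z1' z1'' z2 z2' z2'' : R -> R).

Hypothesis Hq : 0 < q <= 1 / 2.
Hypothesis HD : 0 < D.
Hypothesis Hbe : 0 < be.
Hypothesis HY3 : 3 <= Y.
Hypothesis HY : 1 / (4 * D) + (1 / 4 + (D - 1) ^ 2 / 2) * be + KM <= Y.
Hypothesis Hub : forall t, 0 <= ub t <= 1.
Hypothesis Hub1 : forall t, ub1 t <= 0.
Hypothesis Hubd : forall t, derivable_pt_lim ub t (ub1 t).
Hypothesis Hg : forall t, 0 <= g t <= be.
Hypothesis Hc : forall t, g t - c t <= KM.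
Hypothesis Hw1 : H2R w1 w1' w1''.
Hypothesis Hw2 : H2R w2 w2' w2''.
Hypothesis Hz1 : H2R z1 z1' z1''.
Hypothesis Hz2 : H2R z2 z2' z2''.
Hypothesis Ew1 : forall t,
  a * w1 t - b * w2 t - (1 - ub t) * w1' t = q * ub t * z1 t + q * (D - 1) * z1' t + w1'' t.
Hypothesis Ew2 : forall t,
  a * w2 t + b * w1 t - (1 - ub t) * w2' t = q * ub t * z2 t + q * (D - 1) * z2' t + w2'' t.
Hypothesis Ez1 : forall t,
  a * z1 t - b * z2 t + c t * z1 t = z1' t + g t * w1' t + D * z1'' t.
Hypothesis Ez2 : forall t,
  a * z2 t + b * z1 t + c t * z2 t = z2' t + g t * w2' t + D * z2'' t.
Hypothesis Hnontrivial : exists t, w1 t <> 0 \/ w2 t <> 0 \/ z1 t <> 0 \/ z2 t <> 0.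

(* [Psi s] is a primitive of [dPsi s], whose terms [twist s z'' z] and [twist s w'' w] are
   the pairings of the equations with z and [be * w]; thus the integrations by parts of the
   energy estimate become the domination of [Psi s] by [H1_density]. *)
Definition Psi (s t : R) : R :=
  (z1 t ^ 2 + z2 t ^ 2) / 2 + D * twist s (z1' t) (z2' t) (z1 t) (z2 t)
  + be * ((1 - ub t) * (w1 t ^ 2 + w2 t ^ 2) / 2
          + q * (D - 1) * twist s (z1 t) (z2 t) (w1 t) (w2 t)
          + twist s (w1' t) (w2' t) (w1 t) (w2 t)).

Definition dPsi (s t : R) : R :=
  z1 t * z1' t + z2 t * z2' t
  + D * (twist s (z1'' t) (z2'' t) (z1 t) (z2 t) + twist s (z1' t) (z2' t) (z1' t) (z2' t))
  + be * (- ub1 t * (w1 t ^ 2 + w2 t ^ 2) / 2 + (1 - ub t) * (w1 t * w1' t + w2 t * w2' t)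
          + q * (D - 1) * (twist s (z1' t) (z2' t) (w1 t) (w2 t)
                           + twist s (z1 t) (z2 t) (w1' t) (w2' t))
          + twist s (w1'' t) (w2'' t) (w1 t) (w2 t) + twist s (w1' t) (w2' t) (w1' t) (w2' t)).

Definition energy (t : R) : R := z1 t ^ 2 + z2 t ^ 2 + be * (w1 t ^ 2 + w2 t ^ 2).

Definition H1_density (t : R) : R :=
  w1 t ^ 2 + w1' t ^ 2 + w2 t ^ 2 + w2' t ^ 2 + z1 t ^ 2 + z1' t ^ 2 + z2 t ^ 2 + z2' t ^ 2.

Lemma Psi_derivative (s t : R) : derivable_pt_lim (Psi s) t (dPsi s t).
Proof.
  destruct (proj1 Hw1 t) as [dw1 dw1'], (proj1 Hw2 t) as [dw2 dw2'].
  destruct (proj1 Hz1 t) as [dz1 dz1'], (proj1 Hz2 t) as [dz2 dz2'].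
  pose proof (Hubd t) as dub.
  apply is_derive_Reals in dw1, dw1', dw2, dw2', dz1, dz1', dz2, dz2', dub.
  apply is_derive_Reals. unfold Psi, dPsi, twist. auto_derive.
  - repeat split; eexists; eassumption.
  - assert (D_eq : forall f l, is_derive f t l -> Derive (fun x => f x) t = l)
      by (intros f l Hf; now apply is_derive_unique).
    rewrite (D_eq _ _ dw1), (D_eq _ _ dw1'), (D_eq _ _ dw2), (D_eq _ _ dw2'),
      (D_eq _ _ dz1), (D_eq _ _ dz1'), (D_eq _ _ dz2), (D_eq _ _ dz2'), (D_eq _ _ dub).
    field.
Qed.

Lemma Psi_dominated (s : R) : s = 1 \/ s = -1 -> forall t,
  Rabs (Psi s t) <= (1 / 2 + D + be * (3 / 2 + q * Rabs (D - 1))) * H1_density t.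
Proof.
  intros hs t.
  assert (sq : forall x, 0 <= x ^ 2) by (intro; apply pow2_ge_0).
  pose proof (sq (w1 t)); pose proof (sq (w1' t)); pose proof (sq (w2 t)); pose proof (sq (w2' t)).
  pose proof (sq (z1 t)); pose proof (sq (z1' t)); pose proof (sq (z2 t)); pose proof (sq (z2' t)).
  assert (bound : forall x1 x2 y1 y2, x1 ^ 2 + x2 ^ 2 + y1 ^ 2 + y2 ^ 2 <= H1_density t ->
            Rabs (twist s x1 x2 y1 y2) <= H1_density t)
    by (intros; eapply Rle_trans; [apply Rabs_twist_le|]; auto).
  assert (Tz := bound (z1' t) (z2' t) (z1 t) (z2 t) ltac:(unfold H1_density; lra)).
  assert (Tzw := bound (z1 t) (z2 t) (w1 t) (w2 t) ltac:(unfold H1_density; lra)).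
  assert (Tw := bound (w1' t) (w2' t) (w1 t) (w2 t) ltac:(unfold H1_density; lra)).
  pose proof (Hub t).
  assert (Hw : 0 <= (1 - ub t) * (w1 t ^ 2 + w2 t ^ 2) / 2 <= H1_density t / 2)
    by (unfold H1_density; split; nra).
  unfold Psi. set (S := H1_density t) in *.
  assert (HA : Rabs ((z1 t ^ 2 + z2 t ^ 2) / 2) <= S / 2)
    by (rewrite Rabs_pos_eq; unfold S, H1_density; lra).
  assert (HB : Rabs ((1 - ub t) * (w1 t ^ 2 + w2 t ^ 2) / 2) <= S / 2)
    by (rewrite Rabs_pos_eq; lra).
  assert (HDz : Rabs (D * twist s (z1' t) (z2' t) (z1 t) (z2 t)) <= D * S)
    by (rewrite Rabs_mult, (Rabs_pos_eq D) by lra; apply Rmult_le_compat_l; lra).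
  assert (Hqzw : Rabs (q * (D - 1) * twist s (z1 t) (z2 t) (w1 t) (w2 t))
                 <= q * Rabs (D - 1) * S).
  { rewrite !Rabs_mult, (Rabs_pos_eq q) by lra.
    apply Rmult_le_compat_l; [pose proof (Rabs_pos (D - 1)); nra | exact Tzw]. }
  assert (HI : Rabs ((1 - ub t) * (w1 t ^ 2 + w2 t ^ 2) / 2
                     + q * (D - 1) * twist s (z1 t) (z2 t) (w1 t) (w2 t)
                     + twist s (w1' t) (w2' t) (w1 t) (w2 t))
               <= (3 / 2 + q * Rabs (D - 1)) * S).
  { eapply Rle_trans; [apply Rabs_triang |].
    eapply Rle_trans; [apply Rplus_le_compat_r, Rabs_triang |]. lra. }
  revert HI; set (I := _ + _ + twist s _ _ _ _); intro HI.
  assert (HbeI : Rabs (be * I) <= be * ((3 / 2 + q * Rabs (D - 1)) * S))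
    by (rewrite Rabs_mult, (Rabs_pos_eq be) by lra; apply Rmult_le_compat_l; lra).
  eapply Rle_trans; [apply Rabs_triang |].
  eapply Rle_trans; [apply Rplus_le_compat_r, Rabs_triang |]. lra.
Qed.

Lemma H1_density_bounded_RInt : bounded_RInt H1_density.
Proof.
  destruct Hw1 as [dw1 [Lw1 [Lw1' _]]], Hw2 as [dw2 [Lw2 [Lw2' _]]].
  destruct Hz1 as [dz1 [Lz1 [Lz1' _]]], Hz2 as [dz2 [Lz2 [Lz2' _]]].
  unfold H1_density. repeat apply bounded_RInt_plus.
  - exact (L2R_bounded_RInt w1 w1' (fun x => proj1 (dw1 x)) Lw1).
  - exact (L2R_bounded_RInt w1' w1'' (fun x => proj2 (dw1 x)) Lw1').
  - exact (L2R_bounded_RInt w2 w2' (fun x => proj1 (dw2 x)) Lw2).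
  - exact (L2R_bounded_RInt w2' w2'' (fun x => proj2 (dw2 x)) Lw2').
  - exact (L2R_bounded_RInt z1 z1' (fun x => proj1 (dz1 x)) Lz1).
  - exact (L2R_bounded_RInt z1' z1'' (fun x => proj2 (dz1 x)) Lz1').
  - exact (L2R_bounded_RInt z2 z2' (fun x => proj1 (dz2 x)) Lz2).
  - exact (L2R_bounded_RInt z2' z2'' (fun x => proj2 (dz2 x)) Lz2').
Qed.

Lemma dPsi_lower_bound (s : R) : s = 1 \/ s = -1 -> forall t,
  (a + s * b - Y) * energy t <= dPsi s t.
Proof.
  intros hs t.
  pose proof (z_energy_estimate s D a b (g t) (c t) KM be (z1 t) (z1' t) (z1'' t)
    (z2 t) (z2' t) (z2'' t) (w1' t) (w2' t) hs HD (Hg t) (Hc t) (Ez1 t) (Ez2 t)) as Iz.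
  pose proof (w_energy_estimate s q D a b (ub t) (ub1 t) (w1 t) (w1' t) (w1'' t)
    (w2 t) (w2' t) (w2'' t) (z1 t) (z1' t) (z2 t) (z2' t) hs Hq (Hub t) (Hub1 t)
    (Ew1 t) (Ew2 t)) as Iw.
  unfold dPsi, energy.
  set (Z := z1 t ^ 2 + z2 t ^ 2) in *. set (W := w1 t ^ 2 + w2 t ^ 2) in *.
  set (W' := w1' t ^ 2 + w2' t ^ 2) in *.
  assert (hZ : 0 <= Z)
    by (unfold Z; pose proof (pow2_ge_0 (z1 t)); pose proof (pow2_ge_0 (z2 t)); lra).
  assert (hW : 0 <= W)
    by (unfold W; pose proof (pow2_ge_0 (w1 t)); pose proof (pow2_ge_0 (w2 t)); lra).
  apply (Rmult_le_compat_l be) in Iw; [| lra].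
  assert ((1 / (4 * D) + KM + (1 / 4 + (D - 1) ^ 2 / 2) * be) * Z <= Y * Z)
    by (apply Rmult_le_compat_r; lra).
  assert (3 / 2 * (be * W) <= Y * (be * W)) by (apply Rmult_le_compat_r; nra).
  nra.
Qed.

Lemma energy_pos_somewhere : exists t, 0 < energy t.
Proof.
  destruct Hnontrivial as [t Ht]. exists t. unfold energy.
  pose proof (pow2_ge_0 (z1 t)); pose proof (pow2_ge_0 (z2 t));
  pose proof (pow2_ge_0 (w1 t)); pose proof (pow2_ge_0 (w2 t)).
  destruct Ht as [Hn | [Hn | [Hn | Hn]]]; apply pow2_gt_0 in Hn; nra.
Qed.

Lemma growth_rate_bound : a + Rabs b <= Y.
Proof.
  apply Rnot_lt_le. intro Hlt.
  assert (Hs : exists s, (s = 1 \/ s = -1) /\ s * b = Rabs b).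
  { destruct (Rle_dec 0 b).
    - exists 1. split; [now left |]. rewrite Rabs_pos_eq; lra.
    - exists (-1). split; [now right |]. rewrite Rabs_left; lra. }
  destruct Hs as [s [hs hsb]].
  assert (Henergy : forall t, 0 <= energy t).
  { intro t. unfold energy.
    pose proof (pow2_ge_0 (z1 t)); pose proof (pow2_ge_0 (z2 t));
    pose proof (pow2_ge_0 (w1 t)); pose proof (pow2_ge_0 (w2 t)); nra. }
  assert (HdPsi : forall t, (a + Rabs b - Y) * energy t <= dPsi s t)
    by (rewrite <- hsb; exact (dPsi_lower_bound s hs)).
  assert (HC : 0 < 1 / 2 + D + be * (3 / 2 + q * Rabs (D - 1)))
    by (assert (0 <= q * Rabs (D - 1)) by (pose proof (Rabs_pos (D - 1)); nra); nra).
  assert (Hzero := nonneg_derivative_dominated_zero (Psi s) (dPsi s) H1_density _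
    (Psi_derivative s) ltac:(intro t; specialize (HdPsi t); specialize (Henergy t); nra)
    HC (Psi_dominated s hs) H1_density_bounded_RInt).
  destruct energy_pos_somewhere as [t Ht].
  specialize (HdPsi t). rewrite Hzero in HdPsi. nra.
Qed.

End EnergyEstimate.

Lemma dphi_nonneg (EA uig u : R) : 0 < EA -> 0 <= dphi EA uig u.
Proof.
  intro hEA. unfold dphi. destruct (Rle_dec u uig); [lra |].
  apply Rmult_le_pos; [| apply Rlt_le, exp_pos].
  apply Rlt_le, Rdiv_lt_0_compat; [lra | apply pow_lt; lra].
Qed.

Theorem proposition3p1
  (q k D EA uig um up : R)
  (ub ub1 ub2 zb zb1 zb2 : R -> R)
  (L M a b : R)
  (w1 w1' w1'' w2 w2' w2'' z1 z1' z1'' z2 z2' z2'' : R -> R) :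
  0 < q -> q <= 1 / 2 -> 0 < k -> 0 < D -> 0 < EA ->
  0 <= up -> up < uig -> uig < um -> um < 1 ->
  weak_detonation_profile q k D EA uig um up ub ub1 ub2 zb zb1 zb2 ->
  (forall x y, x <= y -> ub y <= ub x) ->
  (forall x, 0 <= ub x <= 1) -> (forall x, 0 <= zb x <= 1) ->
  is_lub (fun y => exists x, y = dphi EA uig (ub x) * zb x) L ->
  is_lub (fun y => exists x, y = (1 + q) * dphi EA uig (ub x) * zb x
                                   - phi EA uig (ub x)) M ->
  0 < L ->
  0 <= a ->
  H2R w1 w1' w1'' -> H2R w2 w2' w2'' -> H2R z1 z1' z1'' -> H2R z2 z2' z2'' ->
  (exists x, w1 x <> 0 \/ w2 x <> 0 \/ z1 x <> 0 \/ z2 x <> 0) ->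
  (forall x,
     a * w1 x - b * w2 x - (1 - ub x) * w1' x
       = q * ub x * z1 x + q * (D - 1) * z1' x + w1'' x) ->
  (forall x,
     a * w2 x + b * w1 x - (1 - ub x) * w2' x
       = q * ub x * z2 x + q * (D - 1) * z2' x + w2'' x) ->
  (forall x,
     a * z1 x - b * z2 x
       + k * (phi EA uig (ub x) - q * dphi EA uig (ub x) * zb x) * z1 x
       = z1' x + k * dphi EA uig (ub x) * zb x * w1' x + D * z1'' x) ->
  (forall x,
     a * z2 x + b * z1 x
       + k * (phi EA uig (ub x) - q * dphi EA uig (ub x) * zb x) * z2 x
       = z2' x + k * dphi EA uig (ub x) * zb x * w2' x + D * z2'' x) ->
  a + Rabs b <=
    Rmax 3 (1 / (4 * D) + (1 / 4 + 1 / 2 * (Rabs (D - 1)) ^ 2) * k * L + k * M).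
Proof.
  intros hq0 hq1 hk hD hEA _ _ _ _ Hprof Hmono Hub Hzb HL HM HL0 _
    Hw1 Hw2 Hz1 Hz2 Hnt E1 E2 E3 E4.
  assert (Hubd : forall t, derivable_pt_lim ub t (ub1 t)) by apply (proj1 Hprof).
  apply (growth_rate_bound q D a b _ (k * L) (k * M) ub ub1
    (fun t => k * dphi EA uig (ub t) * zb t)
    (fun t => k * (phi EA uig (ub t) - q * dphi EA uig (ub t) * zb t))
    w1 w1' w1'' w2 w2' w2'' z1 z1' z1'' z2 z2' z2''); auto.
  - now apply Rmult_lt_0_compat.
  - apply Rmax_l.
  - eapply Rle_trans; [| apply Rmax_r]. rewrite pow2_abs. lra.
  - exact (nonpos_derivative_0 ub (fun t => exist _ (ub1 t) (Hubd t)) Hmono).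
  - intro t. pose proof (dphi_nonneg EA uig (ub t) hEA). pose proof (Hzb t).
    assert (dphi EA uig (ub t) * zb t <= L) by (apply (proj1 HL); now exists t).
    rewrite Rmult_assoc. split.
    + apply Rmult_le_pos; [lra | nra].
    + apply Rmult_le_compat_l; lra.
  - intro t.
    assert ((1 + q) * dphi EA uig (ub t) * zb t - phi EA uig (ub t) <= M)
      by (apply (proj1 HM); now exists t).
    replace (k * dphi EA uig (ub t) * zb t
             - k * (phi EA uig (ub t) - q * dphi EA uig (ub t) * zb t))
      with (k * ((1 + q) * dphi EA uig (ub t) * zb t - phi EA uig (ub t))) by ring.
    apply Rmult_le_compat_l; lra.
Qed.
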